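(* Let $G=(V,E)$ be a finite simple graph with at least one edge and no isolated vertices, let $\overline{\deg}=\frac1{|V|}\sum_{v\in V}\deg v$ be its average degree, let $\lambda_N$ be the largest eigenvalue of its normalized Laplacian (so $\lambda_N>1$), and let $d\ge0$ be an integer. Then \[ \chi^d(G)\;\ge\;\frac{\lambda_N}{\lambda_N-1+d/\overline{\deg}}. \] Moreover, the bound is sharp: there exist graphs (and values of $d$) for which equality holds.
   Context: For a graph $G$ with adjacency matrix $A$ ($A_{v,w}=1$ if $v\sim w$, else $0$) and degree matrix $D=\mathrm{diag}(\deg v)$, the normalized Laplacian is $L=\mathrm{Id}-D^{-1}A$, with real eigenvalues $0=\lambda_1\le\dots\le\lambda_N$. For an integer $d\ge0$, a vertex coloring $V\to\{1,\dots,k\}$ is $d$-improper if every vertex has at most $d$ neighbors with the same color as itself; $\chi^d(G)$ is the least $k$ admitting a $d$-improper $k$-coloring. *)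

From HB Require Import structures.
From mathcomp Require Import all_boot all_order all_algebra.
From mathcomp Require Export reals.
Set Implicit Arguments. Unset Strict Implicit. Unset Printing Implicit Defensive.
Import Order.TTheory GRing.Theory Num.Theory.
Local Open Scope ring_scope.

Definition simple_graph n (e : rel 'I_n) : Prop :=
  (forall v w, e v w = e w v) /\ (forall v, ~~ e v v).

Definition has_edge n (e : rel 'I_n) : Prop := exists v w, e v w.

Definition deg n (e : rel 'I_n) (v : 'I_n) : nat := #|[set w | e v w]|.

Definition no_isolated n (e : rel 'I_n) : Prop := forall v, (0 < deg e v)%N.

Definition avg_deg (R : realType) n (e : rel 'I_n) : R :=
  (\sum_(v < n) deg e v)%:R / n%:R.

Definition adjmx (R : realType) n (e : rel 'I_n) : 'M[R]_n :=
  \matrix_(i, j) (e i j)%:R.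

Definition degmx (R : realType) n (e : rel 'I_n) : 'M[R]_n :=
  \matrix_(i, j) ((i == j)%:R * (deg e i)%:R).

Definition norm_laplacian (R : realType) n (e : rel 'I_n) : 'M[R]_n :=
  1%:M - invmx (degmx R e) *m adjmx R e.

Definition largest_eigenvalue (R : realType) n (e : rel 'I_n) (lam : R) : Prop :=
  eigenvalue (norm_laplacian R e) lam /\
  (forall mu, eigenvalue (norm_laplacian R e) mu -> mu <= lam).

Definition d_improper n (e : rel 'I_n) (d k : nat) (c : {ffun 'I_n -> 'I_k}) : bool :=
  [forall v, #|[set w | e v w && (c w == c v)]| <= d]%N.

(* chi^d(G): least k admitting a d-improper k-coloring (n itself always works) *)
Definition improper_chromatic n (e : rel 'I_n) (d : nat) : nat :=
  \big[minn/n]_(k < n.+1 | [exists c : {ffun 'I_n -> 'I_k}, d_improper e d c]) (k : nat).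

From HB Require Import structures.
From mathcomp Require Import all_boot all_order all_algebra.
From mathcomp Require Import reals.
From mathcomp Require Import ring lra.
Set Implicit Arguments. Unset Strict Implicit. Unset Printing Implicit Defensive.
Import Order.TTheory GRing.Theory Num.Theory.
Local Open Scope ring_scope.

(* Write N f = f D f^T, S f = f A f^T and Q f = N f - S f (the edge sum of
   (f i - f j)^2).  The supremum s of the Rayleigh quotients Q f / N f is an
   eigenvalue of L: the form f (A + (s - 1) D) f^T = s N f - Q f is positive
   semidefinite, and were A + (s - 1) D invertible it would be coercive, which
   would push every quotient below s - c / n.  Hence the largest eigenvalue lam
   satisfies Q f <= lam N f for all f.
   For a d-improper k-colouring c apply this to the centred class indicators
   g_a = 1_{c = a} - 1/k.  Summed over the colours a, N gives vol (1 - 1/k) and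
   Q gives vol - M, where vol is the sum of the degrees and M <= n d counts
   ordered monochromatic edges.  So vol - n d <= lam vol (1 - 1/k), which
   rearranges to the bound.  Equality holds for K2 with d = 0: lam = 2 and
   chi^0 = 2. *)

Lemma quad_ge0_disc (R : realFieldType) (a b c : R) : 0 <= a ->
  (forall t, 0 <= c + 2 * t * b + t ^+ 2 * a) -> b ^+ 2 <= a * c.
Proof.
move=> a_ge0 quad_ge0; have [a_gt0|] := boolP (0 < a).
  have := quad_ge0 (- b / a).
  have -> : c + 2 * (- b / a) * b + (- b / a) ^+ 2 * a = (a * c - b ^+ 2) / a.
    by field; rewrite gt_eqF.
  by rewrite pmulr_lge0 ?invr_gt0 // subr_ge0.
rewrite lt_def a_ge0 andbT negbK => /eqP a0; subst a.
rewrite mul0r; have [->|b_neq0] := eqVneq b 0; first by rewrite expr0n.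
have := quad_ge0 (- (c + 1) / (2 * b)).
have -> : c + 2 * (- (c + 1) / (2 * b)) * b + (- (c + 1) / (2 * b)) ^+ 2 * 0 = -1.
  by field.
by rewrite ler0N1.
Qed.

Section MatrixForm.
Variables (R : realFieldType) (n : nat).
Implicit Types (P : 'M[R]_n) (x y f : 'rV[R]_n).

Definition mxform P x y : R := (x *m P *m y^T) 0 0.

Lemma mxformE P x y : mxform P x y = \sum_i \sum_j x 0 i * P i j * y 0 j.
Proof.
rewrite /mxform mxE exchange_big /=; apply: eq_bigr => j _.
by rewrite !mxE mulr_suml.
Qed.

Lemma mxformDl P1 P2 x y : mxform (P1 + P2) x y = mxform P1 x y + mxform P2 x y.
Proof. by rewrite /mxform mulmxDr mulmxDl mxE. Qed.

Lemma mxformZl a P x y : mxform (a *: P) x y = a * mxform P x y.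
Proof. by rewrite /mxform -scalemxAr -scalemxAl mxE. Qed.

Lemma mxformC P x y : P^T = P -> mxform P y x = mxform P x y.
Proof.
move=> P_sym; rewrite !mxformE exchange_big /=.
apply: eq_bigr => i _; apply: eq_bigr => j _.
rewrite -{1}P_sym mxE; ring.
Qed.

Lemma mxform_line P x y t : P^T = P ->
  mxform P (x + t *: y) (x + t *: y) =
  mxform P x x + 2 * t * mxform P x y + t ^+ 2 * mxform P y y.
Proof.
move=> P_sym.
rewrite (_ : 2 * t * mxform P x y = t * mxform P x y + t * mxform P y x);
  last by rewrite mxformC //; ring.
rewrite !mxformE !mulr_sumr -!big_split /=; apply: eq_bigr => i _.
rewrite !mulr_sumr -!big_split /=; apply: eq_bigr => j _.
rewrite !mxE; ring.
Qed.

Lemma mxform_Cauchy_Schwarz P x y : P^T = P -> (forall z, 0 <= mxform P z z) ->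
  mxform P x y ^+ 2 <= mxform P y y * mxform P x x.
Proof.
move=> P_sym P_psd; apply: quad_ge0_disc => // t.
by rewrite -mxform_line.
Qed.

Lemma mxform_le_sum_abs P f :
  mxform P f f <= (\sum_i \sum_j `|P i j|) * \sum_i f 0 i ^+ 2.
Proof.
set S := \sum_i _ ^+ 2.
have sqr_le_S i : `|f 0 i| ^+ 2 <= S.
  rewrite real_normK ?num_real // /S (bigD1 i) //= lerDl.
  by apply: sumr_ge0 => j _; apply: sqr_ge0.
rewrite mxformE mulr_suml; apply: ler_sum => i _.
rewrite mulr_suml; apply: ler_sum => j _.
apply: le_trans (ler_norm _) _.
rewrite (mulrC (f 0 i)) -mulrA normrM ler_wpM2l // normrM.
have := sqr_le_S i; have := sqr_le_S j.
have := normr_ge0 (f 0 i); have := normr_ge0 (f 0 j); nra.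
Qed.

(* Coercivity of an invertible positive semidefinite form: with [M = P^-1],
   [|f|^2 = B(f M, f)], and Cauchy-Schwarz bounds this by [B(f M, f M) B(f, f)]
   where [B(f M, f M) = f M f^T <= K |f|^2]. *)
Lemma mxform_coercive P : P^T = P -> (forall z, 0 <= mxform P z z) -> P \in unitmx ->
  exists2 c : R, 0 < c & forall f, c * (\sum_i f 0 i ^+ 2) <= mxform P f f.
Proof.
move=> P_sym P_psd P_unit; pose M := invmx P.
have M_sym : M^T = M by rewrite /M trmx_inv P_sym.
pose K := \sum_i \sum_j `|M i j|.
have K_ge0 : 0 <= K by apply: sumr_ge0 => i _; apply: sumr_ge0.
exists (K + 1)^-1; first by rewrite invr_gt0; lra.
move=> f; set S := \sum_i _ ^+ 2.
have S_ge0 : 0 <= S by apply: sumr_ge0 => i _; apply: sqr_ge0.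
have fMf : mxform P (f *m M) f = S.
  by rewrite /mxform mulmxKV // mxE; apply: eq_bigr => i _; rewrite !mxE expr2.
have fMfM : mxform P (f *m M) (f *m M) = mxform M f f.
  by rewrite /mxform mulmxKV // trmx_mul M_sym mulmxA.
have := mxform_Cauchy_Schwarz (f *m M) f P_sym P_psd.
rewrite fMf fMfM => CS.
have := mxform_le_sum_abs M f; rewrite -/K -/S => MK.
have := P_psd f; set B := mxform P f f => B_ge0.
rewrite mulrC ler_pdivrMr; last by lra.
have [->|S_neq0] := eqVneq S 0; first by nra.
have S_gt0 : 0 < S by rewrite lt_def S_neq0.
suff : S <= B * K by nra.
rewrite -(ler_pM2r S_gt0) -mulrA -expr2.
by apply: le_trans CS _; apply: ler_wpM2l.
Qed.

End MatrixForm.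

Lemma sum_delta (R : nzRingType) n (i : 'I_n) (F : 'I_n -> R) :
  \sum_j ((i == j)%:R * F j) = F i.
Proof.
rewrite (bigD1 i) //= eqxx mul1r big1 ?addr0 // => j /negbTE.
by rewrite eq_sym => ->; rewrite mul0r.
Qed.

Lemma deg_le n (e : rel 'I_n) v : (deg e v <= n)%N.
Proof. by apply: leq_trans (max_card _) _; rewrite card_ord. Qed.

Lemma sum_adj_deg (R : nzSemiRingType) n (e : rel 'I_n) v :
  \sum_w ((e v w)%:R : R) = (deg e v)%:R.
Proof.
rewrite /deg -sum1_card natr_sum [RHS]big_mkcond /=; apply: eq_bigr => w _.
by rewrite inE; case: (e v w).
Qed.

Section GraphForms.
Variables (R : realFieldType) (n : nat) (e : rel 'I_n).
Implicit Types (f : 'rV[R]_n).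

Definition degree_form f : R := \sum_i (deg e i)%:R * f 0 i ^+ 2.
Definition adj_form f : R := \sum_i \sum_j (e i j)%:R * f 0 i * f 0 j.
Definition laplace_form f : R := degree_form f - adj_form f.

Lemma degree_form0 : degree_form 0 = 0.
Proof. by rewrite /degree_form big1 // => i _; rewrite mxE expr0n mulr0. Qed.

Lemma laplace_form0 : laplace_form 0 = 0.
Proof.
rewrite /laplace_form degree_form0 /adj_form big1 ?subr0 // => i _.
by rewrite big1 // => j _; rewrite !mxE !mulr0.
Qed.

Lemma degree_form_ge0 f : 0 <= degree_form f.
Proof. by apply: sumr_ge0 => i _; rewrite mulr_ge0 // sqr_ge0. Qed.

Lemma degree_form_gt0 f : no_isolated e -> f != 0 -> 0 < degree_form f.
Proof.
move=> noi f_neq0; rewrite lt_def degree_form_ge0 andbT.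
apply: contra f_neq0 => /eqP N0; apply/eqP/rowP => i; rewrite mxE.
have term_ge0 j : 0 <= (deg e j)%:R * f 0 j ^+ 2 by rewrite mulr_ge0 // sqr_ge0.
have /eqP := @psumr_eq0P _ _ _ _ (fun j _ => term_ge0 j) N0 i isT.
rewrite mulf_eq0 pnatr_eq0 sqrf_eq0 => /orP[/eqP deg0|/eqP //].
by have := noi i; rewrite deg0.
Qed.

Lemma degree_form_le f : degree_form f <= n%:R * \sum_i f 0 i ^+ 2.
Proof.
rewrite /degree_form mulr_sumr; apply: ler_sum => i _.
by rewrite ler_wpM2r ?sqr_ge0 // ler_nat deg_le.
Qed.

Hypothesis e_sym : forall v w, e v w = e w v.

Lemma sum_adj_weight (g : 'I_n -> R) :
  \sum_i \sum_j (e i j)%:R * g j = \sum_j (deg e j)%:R * g j.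
Proof.
rewrite exchange_big /=; apply: eq_bigr => j _.
rewrite -mulr_suml -sum_adj_deg; congr (_ * _); apply: eq_bigr => i _.
by rewrite e_sym.
Qed.

(* [2 N(f) + 2 S(f)] is the sum over ordered edges of [(f i + f j)^2]. *)
Lemma laplace_form_le2 f : laplace_form f <= 2 * degree_form f.
Proof.
have sum_sqr : \sum_i \sum_j (e i j)%:R * (f 0 i + f 0 j) ^+ 2 =
    degree_form f + degree_form f + 2 * adj_form f.
  rewrite {2}/degree_form -sum_adj_weight /degree_form /adj_form.
  rewrite mulr_sumr -!big_split /=; apply: eq_bigr => i _.
  rewrite -sum_adj_deg mulr_suml mulr_sumr -!big_split /=.
  by apply: eq_bigr => j _; ring.
have : 0 <= \sum_i \sum_j (e i j)%:R * (f 0 i + f 0 j) ^+ 2.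
  by apply: sumr_ge0 => i _; apply: sumr_ge0 => j _; rewrite mulr_ge0 // sqr_ge0.
rewrite sum_sqr /laplace_form; lra.
Qed.

End GraphForms.

Lemma laplace_form_bound_ge1 (R : realFieldType) n (e : rel 'I_n) (lam : R) (v : 'I_n) :
  (forall v, ~~ e v v) -> no_isolated e ->
  (forall f : 'rV[R]_n, laplace_form e f <= lam * degree_form e f) -> 1 <= lam.
Proof.
move=> e_irr noi lam_ub; pose delta : 'rV[R]_n := \row_i (v == i)%:R.
have N_delta : degree_form e delta = (deg e v)%:R.
  rewrite /degree_form -[RHS](sum_delta v (fun i => (deg e i)%:R)).
  apply: eq_bigr => i _; rewrite mxE.
  by case: (v == i); rewrite ?(expr1n, expr0n, mulr1, mulr0, mul1r, mul0r).
have S_delta : adj_form e delta = 0.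
  rewrite /adj_form big1 // => i _; rewrite big1 // => j _; rewrite !mxE.
  have [<-|] := eqVneq v i; last by rewrite mulr0 mul0r.
  have [<-|] := eqVneq v j; last by rewrite mulr0.
  by rewrite (negbTE (e_irr v)) !mul0r.
have := lam_ub delta; rewrite /laplace_form S_delta subr0 N_delta.
by rewrite -{1}(mul1r (deg e v)%:R) ler_pM2r // ltr0n.
Qed.

Section NormalizedLaplacian.
Variables (R : realType) (n : nat) (e : rel 'I_n).
Hypotheses (e_simple : simple_graph e) (noi : no_isolated e).

Local Notation A := (adjmx R e).
Local Notation D := (degmx R e).
Local Notation L := (norm_laplacian R e).

Lemma trmx_adjmx : A^T = A.
Proof. by apply/matrixP => i j; rewrite !mxE e_simple.1. Qed.

Lemma trmx_degmx : D^T = D.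
Proof.
by apply/matrixP => i j; rewrite !mxE eq_sym; case: eqVneq => [->|]; rewrite ?mul0r.
Qed.

Lemma degmx_unit : D \in unitmx.
Proof.
have -> : D = diag_mx (\row_i (deg e i)%:R).
  apply/matrixP => i j; rewrite !mxE.
  by case: eqVneq => [->|]; rewrite ?mulr1n ?mul1r ?mul0r.
rewrite unitmxE det_diag unitfE; apply/prodf_neq0 => i _.
by rewrite mxE pnatr_eq0 -lt0n noi.
Qed.

Lemma mxform_adjmx f : mxform A f f = adj_form e f.
Proof.
rewrite mxformE; apply: eq_bigr => i _; apply: eq_bigr => j _.
by rewrite mxE; ring.
Qed.

Lemma mxform_degmx f : mxform D f f = degree_form e f.
Proof.
rewrite mxformE; apply: eq_bigr => i _.
rewrite expr2 mulrA -(sum_delta i (fun j => (deg e i)%:R * f 0 i * f 0 j)).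
by apply: eq_bigr => j _; rewrite mxE; case: eqVneq => [->|_] /=; ring.
Qed.

(* With [w = v D^-1], [v L = s v] becomes [w A = (1 - s) w D]. *)
Lemma eigenvalue_norm_laplacianP s :
  reflect (exists2 w : 'rV_n, w != 0 & w *m A = (1 - s) *: (w *m D))
          (eigenvalue L s).
Proof.
have eigen_eq (w : 'rV_n) :
    ((w *m D) *m L == s *: (w *m D)) = (w *m A == (1 - s) *: (w *m D)).
  rewrite /norm_laplacian mulmxBr mulmx1 mulmxA mulmxK ?degmx_unit //.
  by rewrite scalerBl scale1r subr_eq addrC -subr_eq.
apply: (iffP eigenvalueP) => [[v vL v_neq0]|[w w_neq0 wA]].
  exists (v *m invmx D).
    by apply: contra v_neq0 => /eqP vD0; rewrite -(mulmxKV degmx_unit v) vD0 mul0mx.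
  by apply/eqP; rewrite -eigen_eq mulmxKV ?degmx_unit ?vL.
exists (w *m D); first by apply/eqP; rewrite eigen_eq wA.
by apply: contra w_neq0 => /eqP wD0; rewrite -(mulmxK degmx_unit w) wD0 mul0mx.
Qed.

Lemma eigenvalue_rayleigh s : eigenvalue L s ->
  exists2 w : 'rV_n, w != 0 & laplace_form e w = s * degree_form e w.
Proof.
move=> /eigenvalue_norm_laplacianP[w w_neq0 wA]; exists w => //.
have : adj_form e w = (1 - s) * degree_form e w.
  by rewrite -mxform_adjmx -mxform_degmx /mxform wA -scalemxAl mxE.
by rewrite /laplace_form => ->; ring.
Qed.

Lemma eigenvalue_norm_laplacian_le2 s : eigenvalue L s -> s <= 2.
Proof.
move=> /eigenvalue_rayleigh[w w_neq0 Qw].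
have := laplace_form_le2 e_simple.1 w; rewrite Qw.
by rewrite ler_pM2r // degree_form_gt0.
Qed.

Hypothesis n_gt0 : (0 < n)%N.

Definition rayleigh_quotients : classical_sets.set R :=
  fun r => exists2 f : 'rV_n, f != 0 & r = laplace_form e f / degree_form e f.

Definition rayleigh_sup : R := sup rayleigh_quotients.

Lemma has_sup_rayleigh_quotients : classical_sets.has_sup rayleigh_quotients.
Proof.
split.
  exists (laplace_form e (const_mx 1) / degree_form e (const_mx 1)).
  exists (const_mx 1) => //; apply/eqP => /rowP /(_ (Ordinal n_gt0)) /eqP.
  by rewrite !mxE oner_eq0.
exists 2 => _ [f f_neq0 ->].
by rewrite ler_pdivrMr ?degree_form_gt0 //; exact: laplace_form_le2 e_simple.1 f.
Qed.

Lemma laplace_form_le_rayleigh_sup f :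
  laplace_form e f <= rayleigh_sup * degree_form e f.
Proof.
have [->|f_neq0] := eqVneq f 0; first by rewrite laplace_form0 degree_form0 mulr0.
rewrite -ler_pdivrMr ?degree_form_gt0 //.
by apply: sup_upper_bound has_sup_rayleigh_quotients _ _; exists f.
Qed.

Local Notation P := (A + (rayleigh_sup - 1) *: D).

Lemma mxform_shifted_adjmx f :
  mxform P f f = rayleigh_sup * degree_form e f - laplace_form e f.
Proof.
rewrite mxformDl mxformZl mxform_adjmx mxform_degmx /laplace_form; ring.
Qed.

(* If [P] were invertible, coercivity would push every Rayleigh quotient below
   [rayleigh_sup - c / n], using [degree_form e f <= n |f|^2]. *)
Lemma shifted_adjmx_singular : P \notin unitmx.
Proof.
apply/negP => P_unit.
have P_sym : P^T = P by rewrite linearD linearZ /= trmx_adjmx // trmx_degmx.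
have P_psd z : 0 <= mxform P z z.
  by rewrite mxform_shifted_adjmx subr_ge0 laplace_form_le_rayleigh_sup.
have [c c_gt0 coerc] := mxform_coercive P_sym P_psd P_unit.
have cn_gt0 : 0 < c / n%:R by rewrite divr_gt0 // ltr0n.
suff : rayleigh_sup <= rayleigh_sup - c / n%:R by lra.
apply: ge_sup; first by case: has_sup_rayleigh_quotients.
move=> _ [f f_neq0 ->]; have N_gt0 := degree_form_gt0 noi f_neq0.
rewrite ler_pdivrMr // mulrBl.
have := coerc f; rewrite mxform_shifted_adjmx => coerc_f.
have : c / n%:R * degree_form e f <= c * \sum_i f 0 i ^+ 2.
  rewrite mulrAC ler_pdivrMr ?ltr0n // -mulrA ler_wpM2l ?(ltW c_gt0) // mulrC.
  exact: degree_form_le.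
lra.
Qed.

Lemma rayleigh_sup_eigenvalue : eigenvalue L rayleigh_sup.
Proof.
move: shifted_adjmx_singular; rewrite unitmxE unitfE negbK => /det0P[x x_neq0 xP].
apply/eigenvalue_norm_laplacianP; exists x => //.
move/eqP: xP; rewrite mulmxDr -scalemxAr addr_eq0 => /eqP ->.
by rewrite -scaleNr opprB.
Qed.

Lemma laplace_form_le_largest_eigenvalue (lam : R) : largest_eigenvalue e lam ->
  forall f, laplace_form e f <= lam * degree_form e f.
Proof.
move=> [_ lam_max] f; apply: le_trans (laplace_form_le_rayleigh_sup f) _.
by rewrite ler_wpM2r ?degree_form_ge0 // lam_max // rayleigh_sup_eigenvalue.
Qed.

End NormalizedLaplacian.

Section Colouring.
Variables (R : realFieldType) (n k : nat) (e : rel 'I_n) (c : {ffun 'I_n -> 'I_k}).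
Hypothesis k_gt0 : (0 < k)%N.

Definition centered_class (a : 'I_k) : 'rV[R]_n := \row_i ((c i == a)%:R - k%:R^-1).

Definition same_colour_deg v : nat := #|[set w | e v w && (c w == c v)]|.

Lemma same_colour_degE v :
  (same_colour_deg v)%:R = \sum_w ((e v w)%:R * (c v == c w)%:R : R).
Proof.
rewrite /same_colour_deg -sum1_card natr_sum big_mkcond /=; apply: eq_bigr => w _.
by rewrite inE eq_sym; case: (e v w) (c v == c w) => [] []; rewrite /= ?(mulr1, mulr0).
Qed.

Lemma sum_centered_class_mul i j :
  \sum_a centered_class a 0 i * centered_class a 0 j = (c i == c j)%:R - k%:R^-1.
Proof.
have k_neq0 : (k%:R : R) != 0 by rewrite pnatr_eq0 -lt0n.
rewrite (eq_bigr (fun a => (c i == a)%:R * ((c j == a)%:R - k%:R^-1) -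
   (c j == a)%:R / k%:R + k%:R^-1 ^+ 2)); last by move=> a _; rewrite !mxE; ring.
rewrite !big_split /= sumrN !sum_delta sumr_const card_ord eq_sym.
by rewrite -mulr_natr; field.
Qed.

Lemma sum_degree_form_centered :
  \sum_a degree_form e (centered_class a) = (\sum_i (deg e i)%:R) * (1 - k%:R^-1).
Proof.
rewrite /degree_form exchange_big /= mulr_suml; apply: eq_bigr => i _.
rewrite -mulr_sumr; congr (_ * _).
by under eq_bigr => a _ do rewrite expr2; rewrite sum_centered_class_mul eqxx.
Qed.

Lemma sum_adj_form_centered :
  \sum_a adj_form e (centered_class a) =
  (\sum_v same_colour_deg v)%:R - (\sum_i (deg e i)%:R) / k%:R.
Proof.
rewrite /adj_form exchange_big /= natr_sum mulr_suml -sumrB; apply: eq_bigr => i _.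
rewrite exchange_big /= same_colour_degE -sum_adj_deg mulr_suml -sumrB.
apply: eq_bigr => j _.
under eq_bigr => a _ do rewrite -mulrA.
by rewrite -mulr_sumr sum_centered_class_mul; ring.
Qed.

Lemma sum_laplace_form_centered :
  \sum_a laplace_form e (centered_class a) =
  \sum_i (deg e i)%:R - (\sum_v same_colour_deg v)%:R.
Proof.
rewrite /laplace_form sumrB sum_degree_form_centered sum_adj_form_centered; ring.
Qed.

End Colouring.

Lemma chromatic_ratio_le (R : realFieldType) (lam x K : R) : 0 < lam -> 0 < K ->
  1 - x <= lam * (1 - K^-1) -> lam / (lam - 1 + x) <= K.
Proof.
move=> lam_gt0 K_gt0 le_lam.
have lamK : lam / K <= lam - 1 + x by move: le_lam; rewrite mulrBr mulr1; lra.
have pos : 0 < lam - 1 + x by apply: lt_le_trans lamK; rewrite divr_gt0.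
by rewrite ler_pdivrMr // -ler_pdivrMl // mulrC.
Qed.

Lemma sum_same_colour_deg_le n k (e : rel 'I_n) d (c : {ffun 'I_n -> 'I_k}) :
  d_improper e d c -> (\sum_v same_colour_deg e c v <= n * d)%N.
Proof.
move=> /forallP c_impr; rewrite -[n in (_ <= n * _)%N]card_ord -sum_nat_const.
by apply: leq_sum => v _; exact: c_impr.
Qed.

Lemma improper_colouring_bound (R : realType) n k (e : rel 'I_n) d (lam : R)
    (c : {ffun 'I_n -> 'I_k}) :
  no_isolated e -> (0 < n)%N -> 0 < lam ->
  (forall f : 'rV[R]_n, laplace_form e f <= lam * degree_form e f) ->
  d_improper e d c ->
  lam / (lam - 1 + d%:R / avg_deg R e) <= k%:R.
Proof.
move=> noi n_gt0 lam_gt0 lam_ub c_impr.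
have k_gt0 : (0 < k)%N by case: k c {c_impr} => [c|//]; case: (c (Ordinal n_gt0)).
set T := \sum_i ((deg e i)%:R : R).
have T_gt0 : 0 < T.
  rewrite /T (bigD1 (Ordinal n_gt0)) //= ltr_pwDl ?ltr0n ?noi //.
  exact: sumr_ge0.
have avgE : avg_deg R e = T / n%:R by rewrite /avg_deg natr_sum.
have sum_le : \sum_a laplace_form e (centered_class R c a) <=
              lam * \sum_a degree_form e (centered_class R c a).
  by rewrite mulr_sumr; apply: ler_sum => a _; exact: lam_ub.
rewrite sum_laplace_form_centered // sum_degree_form_centered // -/T in sum_le.
have mono_le : ((\sum_v same_colour_deg e c v)%:R : R) <= n%:R * d%:R.
  by rewrite -natrM ler_nat sum_same_colour_deg_le.
apply: chromatic_ratio_le; rewrite ?ltr0n //.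
rewrite -(ler_pM2l T_gt0) mulrCA.
have -> : T * (1 - d%:R / avg_deg R e) = T - n%:R * d%:R.
  by rewrite avgE; field; rewrite !gt_eqF ?ltr0n.
lra.
Qed.

Lemma improper_chromatic_spec n (e : rel 'I_n) d : (forall v, ~~ e v v) ->
  (improper_chromatic e d <= n)%N /\
  exists c : {ffun 'I_n -> 'I_(improper_chromatic e d)}, d_improper e d c.
Proof.
move=> e_irr; rewrite /improper_chromatic.
apply: (big_ind (fun k => (k <= n)%N /\ exists c : {ffun 'I_n -> 'I_k}, d_improper e d c)).
- split => //; exists [ffun v => v]; apply/forallP => v.
  rewrite (_ : [set w | _] = set0) ?cards0 //; apply/setP => w; rewrite !inE !ffunE.
  by case: eqVneq => [->|]; rewrite ?(negbTE (e_irr v)) ?andbF.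
- by move=> k1 k2 k1_ok k2_ok; rewrite /minn; case: ifP.
- move=> k /existsP[c c_impr]; split; last by exists c.
  by rewrite -ltnS ltn_ord.
Qed.

Definition K2 : rel 'I_2 := fun v w => v != w.

Lemma K2_simple : simple_graph K2.
Proof. by split => [v w|v]; rewrite /K2 ?eqxx // eq_sym. Qed.

Lemma K2_deg v : deg K2 v = 1%N.
Proof.
rewrite /deg (_ : [set w | K2 v w] = [set~ v]) ?cardsC1 ?card_ord //.
by apply/setP => w; rewrite !inE /K2 eq_sym.
Qed.

Lemma K2_largest_eigenvalue (R : realType) : largest_eigenvalue K2 (2 : R).
Proof.
have K2_noi : no_isolated K2 by move=> v; rewrite K2_deg.
split; last by move=> mu /(eigenvalue_norm_laplacian_le2 K2_simple K2_noi).
have -> : norm_laplacian R K2 = 1%:M - adjmx R K2.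
  rewrite /norm_laplacian (_ : degmx R K2 = 1%:M) ?invmx1 ?mul1mx //.
  by apply/matrixP => i j; rewrite !mxE K2_deg mulr1; case: (i == j).
apply/eigenvalueP; exists (\row_i (if i == ord0 then 1 else -1 : R)).
  apply/rowP => j; rewrite !mxE !big_ord_recl big_ord0 !mxE.
  by case: j => [[|[|//]]] j_lt /=; rewrite /K2 /=; ring.
by apply/eqP => /rowP /(_ ord0); rewrite !mxE /= => /eqP; rewrite oner_eq0.
Qed.

Lemma K2_improper_chromatic : improper_chromatic K2 0 = 2%N.
Proof.
have [chi_le [c c_impr]] := improper_chromatic_spec 0 K2_simple.2.
apply/eqP; rewrite eqn_leq chi_le /=.
move: c c_impr; case: (improper_chromatic K2 0) => [c|[c|//]] c_impr.
  by case: (c ord0).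
move/forallP: c_impr => /(_ ord0); rewrite leqn0 cards_eq0 => /eqP c_proper.
suff : ord_max \in [set w | K2 ord0 w && (c w == c ord0)] by rewrite c_proper inE.
by rewrite inE /K2 /= (ord1 (c ord_max)) (ord1 (c ord0)) eqxx.
Qed.

Theorem mainTheorem13 (R : realType) :
  (forall (n : nat) (e : rel 'I_n) (d : nat) (lam : R),
     simple_graph e -> has_edge e -> no_isolated e ->
     largest_eigenvalue e lam ->
     lam / (lam - 1 + d%:R / avg_deg R e) <= (improper_chromatic e d)%:R)
  /\
  (exists (n : nat) (e : rel 'I_n) (d : nat) (lam : R),
     [/\ simple_graph e, has_edge e, no_isolated e,
         largest_eigenvalue e lam &
         (improper_chromatic e d)%:R = lam / (lam - 1 + d%:R / avg_deg R e)]).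
Proof.
split.
  move=> n e d lam e_simple [v [w _]] noi lam_largest.
  have n_gt0 : (0 < n)%N by apply: leq_ltn_trans (ltn_ord v).
  have lam_ub := laplace_form_le_largest_eigenvalue e_simple noi n_gt0 lam_largest.
  have lam_ge1 := laplace_form_bound_ge1 v e_simple.2 noi lam_ub.
  have [_ [c c_impr]] := improper_chromatic_spec d e_simple.2.
  by apply: improper_colouring_bound noi n_gt0 _ lam_ub c_impr; lra.
exists 2%N, K2, 0%N, 2; split.
- exact: K2_simple.
- by exists ord0, ord_max.
- by move=> v; rewrite K2_deg.
- exact: K2_largest_eigenvalue.
- by rewrite K2_improper_chromatic mul0r addr0 (_ : 2 - 1 = 1 :> R) ?divr1 //; lra.
Qed.
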